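(* Let $L\ge2$, $N\ge d_x$, $X_\epsilon$ of rank $d_x$, $\tilde W_{L:1}X=Y$, and $p=\min(d_x,d_y)$ (i.e. every hidden width $d_i$ is at least $\min(d_x,d_y)$). Then the end-to-end matrices of all global minimizers of $\mathcal L_{base}$ and of $\mathcal L_{st}$ coincide, both being equal to $YX_\epsilon^T(X_\epsilon X_\epsilon^T)^{-1}$.
   Context: Clean inputs $x_i\in\mathbb R^{d_x}$, targets $y_i\in\mathbb R^{d_y}$, noise $\epsilon_i\in\mathbb R^{d_x}$, $i=1,\dots,N$; $X\in\mathbb R^{d_x\times N}$ has columns $x_i$, $X_\epsilon$ has columns $x_i+\epsilon_i$, $Y\in\mathbb R^{d_y\times N}$ has columns $y_i$. A deep linear network with $L$ layers is a tuple $(W_L,\dots,W_1)$ with $W_i\in\mathbb R^{d_i\times d_{i-1}}$, $d_0=d_x$, $d_L=d_y$; $W_{i:j}:=W_iW_{i-1}\cdots W_j$; $p:=\min_{0\le i\le L}d_i$. Base loss: $\mathcal L_{base}(W_L,\dots,W_1)=\|W_{L:1}X_\epsilon-Y\|_F^2$. Fix $i^*\in\{1,\dots,L\}$, $\lambda>0$ and teacher weights $(\tilde W_L,\dots,\tilde W_1)$ of the same shapes; the student–teacher loss is $\mathcal L_{st}(W_L,\dots,W_1)=\|W_{L:1}X_\epsilon-Y\|_F^2+\lambda\|W_{i^*:1}X_\epsilon-\tilde W_{i^*:1}X\|_F^2$. *)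

From HB Require Import structures.
From mathcomp Require Import all_boot all_order all_algebra.
Set Implicit Arguments. Unset Strict Implicit. Unset Printing Implicit Defensive.
Import Order.TTheory GRing.Theory Num.Theory.
Local Open Scope ring_scope.

(* A deep linear network with widths d : nat -> nat (d 0 = d_x, d L = d_y)
   is a family W with  W i : 'M_(d i.+1, d i)  playing the role of the
   paper's W_{i+1} (0-based indexing).  Components with i >= L are
   irrelevant to all losses below. *)
Definition weights (R : pzRingType) (d : nat -> nat) :=
  forall i : nat, 'M[R]_(d i.+1, d i).

Fixpoint prodW (R : pzRingType) (d : nat -> nat) (W : weights R d) (k : nat)
  : 'M[R]_(d k, d 0) :=
  match k with
  | 0 => 1%:M
  | k'.+1 => W k' *m prodW W k'
  end.

Definition frob2 (R : pzRingType) (m n : nat) (A : 'M[R]_(m, n)) : R :=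
  \sum_(i < m) \sum_(j < n) A i j ^+ 2.

Definition pmin (d : nat -> nat) (L : nat) : nat :=
  \big[minn/d 0%N]_(i < L.+1) d i.

Definition L_base (R : pzRingType) (d : nat -> nat) (L N : nat)
  (Xe : 'M[R]_(d 0, N)) (Y : 'M[R]_(d L, N)) (W : weights R d) : R :=
  frob2 (prodW W L *m Xe - Y).

Definition L_st (R : pzRingType) (d : nat -> nat) (L N istar : nat) (lam : R)
  (X Xe : 'M[R]_(d 0, N)) (Y : 'M[R]_(d L, N)) (Wt : weights R d)
  (W : weights R d) : R :=
  frob2 (prodW W L *m Xe - Y)
  + lam * frob2 (prodW W istar *m Xe - prodW Wt istar *m X).

Definition global_minimizer (R : numDomainType) (T : Type) (f : T -> R) (x : T) :=
  forall y : T, f x <= f y.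

From HB Require Import structures.
From mathcomp Require Import all_boot all_order all_algebra.
From mathcomp Require Import lra.
Import Order.TTheory GRing.Theory Num.Theory.
Set Implicit Arguments. Unset Strict Implicit.
Local Open Scope ring_scope.

(* Both losses are least-squares problems in the end-to-end matrices.
   For a row-free data matrix Xe (rank Xe = d_x) the Gram matrix Xe Xe^T is
   invertible, and for every target T the matrix lsq T := T Xe^T (Xe Xe^T)^-1
   satisfies the Pythagorean identity
     ||P Xe - T||^2 = ||lsq T Xe - T||^2 + ||(P - lsq T) Xe||^2,
   so lsq T is the unique minimiser of P |-> ||P Xe - T||^2.
   Precomposing the first teacher layer with B := lsq X gives a network W'
   with W'_{k:1} = Wt_{k:1} B = lsq (Wt_{k:1} X) for every k >= 1; as
   Wt_{L:1} X = Y, W' attains the minimum of BOTH residual terms, namely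
   W'_{L:1} = lsq Y = Y Xe^T (Xe Xe^T)^-1 and W'_{i*:1} = lsq (Wt_{i*:1} X).
   Comparing a global minimiser W with W' therefore forces
   ||W_{L:1} Xe - Y||^2 to be minimal, hence W_{L:1} = lsq Y by uniqueness. *)

Section Frobenius.
Variable R : realFieldType.

Lemma frob2_tr m n (a : 'M[R]_(m, n)) : frob2 a = \tr (a *m a^T).
Proof.
rewrite /frob2 /mxtrace; apply: eq_bigr => i _; rewrite mxE.
by apply: eq_bigr => j _; rewrite mxE expr2.
Qed.

Lemma frob2_ge0 m n (a : 'M[R]_(m, n)) : 0 <= frob2 a.
Proof. by apply: sumr_ge0 => i _; apply: sumr_ge0 => j _; apply: sqr_ge0. Qed.

Lemma frob2_eq0 m n (a : 'M[R]_(m, n)) : frob2 a = 0 -> a = 0.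
Proof.
move=> a0; apply/matrixP => i j; rewrite mxE.
have row0 : \sum_(l < n) a i l ^+ 2 = 0.
  move/psumr_eq0P: a0; apply=> // k _.
  by apply: sumr_ge0 => l _; apply: sqr_ge0.
have : a i j ^+ 2 = 0 by move/psumr_eq0P: row0; apply=> // l _; apply: sqr_ge0.
by move/eqP; rewrite sqrf_eq0 => /eqP.
Qed.

Lemma frob2D_orth m n (a b : 'M[R]_(m, n)) :
  a *m b^T = 0 -> frob2 (a + b) = frob2 a + frob2 b.
Proof.
move=> ab0; have ba0 : b *m a^T = 0 by rewrite -[b]trmxK -trmx_mul ab0 trmx0.
rewrite !frob2_tr linearD /= mulmxDl !mulmxDr ab0 ba0 addr0 add0r.
by rewrite linearD.
Qed.

End Frobenius.

Section LeastSquares.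
Variables (R : realFieldType) (k N : nat) (Xe : 'M[R]_(k, N)).
Hypothesis Xe_free : row_free Xe.

(* For row-free Xe the Gram matrix is invertible: if K Xe Xe^T = 0 then
   ||K Xe||^2 = tr (K Xe (K Xe)^T) = 0, so K Xe = 0 and hence K = 0. *)
Lemma gram_unit : Xe *m Xe^T \in unitmx.
Proof.
rewrite -row_free_unit -kermx_eq0; set K := kermx _.
have KXe0 : K *m Xe = 0.
  apply: frob2_eq0; rewrite frob2_tr trmx_mul mulmxA -(mulmxA K).
  by rewrite mulmx_ker mul0mx mxtrace0.
by rewrite -(mulmx_free_eq0 _ Xe_free) KXe0.
Qed.

Definition lsq m (T : 'M[R]_(m, N)) : 'M[R]_(m, k) :=
  T *m Xe^T *m invmx (Xe *m Xe^T).

Lemma lsq_mull m n (A : 'M[R]_(m, n)) (T : 'M[R]_(n, N)) :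
  lsq (A *m T) = A *m lsq T.
Proof. by rewrite /lsq !mulmxA. Qed.

Lemma lsq_residual_orth m (T : 'M[R]_(m, N)) : Xe *m (lsq T *m Xe - T)^T = 0.
Proof.
rewrite linearB /= !trmx_mul trmx_inv trmx_mul trmxK mulmxBr !mulmxA.
by rewrite mulmxV ?gram_unit // mul1mx subrr.
Qed.

Lemma lsq_pythagoras m (T : 'M[R]_(m, N)) (P : 'M[R]_(m, k)) :
  frob2 (P *m Xe - T) = frob2 (lsq T *m Xe - T) + frob2 ((P - lsq T) *m Xe).
Proof.
have -> : P *m Xe - T = (P - lsq T) *m Xe + (lsq T *m Xe - T).
  by rewrite mulmxBl addrA subrK.
rewrite frob2D_orth 1?addrC //.
by rewrite -mulmxA lsq_residual_orth mulmx0.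
Qed.

Lemma lsq_min m (T : 'M[R]_(m, N)) (P : 'M[R]_(m, k)) :
  frob2 (lsq T *m Xe - T) <= frob2 (P *m Xe - T).
Proof. by rewrite (lsq_pythagoras T P) lerDl frob2_ge0. Qed.

(* lsq T is the unique minimiser: the excess (P - lsq T) Xe must vanish,
   and Xe has a right inverse Xe^T (Xe Xe^T)^-1. *)
Lemma lsq_unique m (T : 'M[R]_(m, N)) (P : 'M[R]_(m, k)) :
  frob2 (P *m Xe - T) <= frob2 (lsq T *m Xe - T) -> P = lsq T.
Proof.
rewrite (lsq_pythagoras T P) gerDl => excess_le0.
have /frob2_eq0 excess0 : frob2 ((P - lsq T) *m Xe) = 0.
  by apply/eqP; rewrite eq_le excess_le0 frob2_ge0.
apply/eqP; rewrite -subr_eq0; apply/eqP.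
by rewrite -[P - _](mulmxK gram_unit) mulmxA excess0 !mul0mx.
Qed.

End LeastSquares.

Section Precompose.
Variables (R : pzRingType) (d : nat -> nat).

Definition precompose (W : weights R d) (B : 'M[R]_(d 0%N)) : weights R d :=
  fun i => match i as n return 'M[R]_(d n.+1, d n) with
           | 0 => W 0%N *m B
           | n.+1 => W n.+1
           end.

Lemma prodW_precompose (W : weights R d) (B : 'M[R]_(d 0%N)) (k : nat) :
  (0 < k)%N -> prodW (precompose W B) k = prodW W k *m B.
Proof.
case: k => // k _; elim: k => [|k IH]; first by rewrite /= !mulmx1.
transitivity (W k.+1 *m (prodW W k.+1 *m B)); first by rewrite -IH.
by rewrite mulmxA.
Qed.

End Precompose.

Lemma weighted_sum_le (R : realFieldType) (a a0 b b0 lam : R) :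
  0 <= lam -> b0 <= b -> a + lam * b <= a0 + lam * b0 -> a <= a0.
Proof. by move=> lam_ge0 /(ler_wpM2l lam_ge0); lra. Qed.

Theorem mainTheorem7 (R : realFieldType) (L N : nat) (d : nat -> nat)
  (X E : 'M[R]_(d 0%N, N)) (Y : 'M[R]_(d L, N))
  (istar : nat) (lam : R) (Wt : weights R d) :
  (2 <= L)%N ->
  (d 0%N <= N)%N ->
  (1 <= istar <= L)%N ->
  0 < lam ->
  \rank (X + E)%R = d 0%N ->
  prodW Wt L *m X = Y ->
  pmin d L = minn (d 0%N) (d L) ->
  let Xe := X + E in
  let Wstar := Y *m Xe^T *m invmx (Xe *m Xe^T) in
  (forall W : weights R d,
     global_minimizer (L_base Xe Y) W -> prodW W L = Wstar) /\
  (forall W : weights R d,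
     global_minimizer (L_st istar lam X Xe Y Wt) W -> prodW W L = Wstar).
Proof.
move=> _ _ /andP[istar_gt0 istar_leL] lam_gt0 rankXe teacherY _ Xe Wstar.
have Xe_free : row_free Xe by apply/eqP.
pose W' := precompose Wt (lsq Xe X).
have W'_i : prodW W' istar = lsq Xe (prodW Wt istar *m X).
  by rewrite prodW_precompose // lsq_mull.
have W'_L : prodW W' L = lsq Xe Y.
  by rewrite prodW_precompose ?(leq_trans istar_gt0) // -teacherY lsq_mull.
split=> W minW; apply: (lsq_unique Xe_free); rewrite -W'_L.
  exact: minW W'.
apply: (weighted_sum_le (ltW lam_gt0) _ (minW W')).
by rewrite W'_i lsq_min.
Qed.
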